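(* Let $P$ be a definite program, $M_0$ the ``vanilla'' meta-interpreter and $Q\in B^E_P$ an atomic query. Then: (1) for every $A\in \mathrm{Call}(P,Q)$ there exists $\mathit{solve}(A')\in \mathrm{Call}(M_0\cup \mathit{ce}(P),\mathit{solve}(Q))$ such that $A$ and $A'$ are variants; (2) for every $\mathit{solve}(A)\in \mathrm{Call}(M_0\cup \mathit{ce}(P),\mathit{solve}(Q))$ with $A\in B^E_P$ there exists $A'\in\mathrm{Call}(P,Q)$ such that $A$ and $A'$ are variants.
   Context: Logic programs are definite; a query is a finite sequence of atoms; derivations use the leftmost selection rule (LD-derivations; the LD-tree of $P\cup\{Q\}$ is the SLD-tree under Prolog's left-to-right selection rule). $B^E_P$ (the extended Herbrand base) is the set of atoms of the language of $P$ taken modulo variance. For a program $P$ and a set of queries $S$, the call set $\mathrm{Call}(P,S)$ is the set of atoms $A$ such that a variant of $A$ is a selected atom in some branch of the LD-tree of $P\cup\{Q\}$ for some $Q\in S$; $\mathrm{Call}(P,Q)=\mathrm{Call}(P,\{Q\})$. Clause encoding: a clause body $B_1,\dots,B_n$ ($n\ge1$) is represented as the term $(B_1,(B_2,\dots,B_n))$ built with a binary functor $,/2$ (for $n=1$ just $B_1$), and an empty body by the constant $\mathit{true}$. The clause-encoding $\mathit{ce}(P)$ is the set of facts $\mathit{clause}(H,B)$, one for each clause $H\leftarrow B$ of $P$. The symbols $,/2$, $\mathit{clause}$, $\mathit{solve}$ do not occur in the language of $P$. The ``vanilla'' meta-interpreter $M_0$ is the program $\mathit{solve}(\mathit{true}).$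 $\mathit{solve}((A,B))\leftarrow \mathit{solve}(A),\mathit{solve}(B).$ $\mathit{solve}(H)\leftarrow \mathit{clause}(H,B),\mathit{solve}(B).$ *)

From Stdlib Require Import List Bool Relations.
Import ListNotations.

(* Prolog-style: a functor is a name plus the
   number of arguments it is applied to.  [Comma], [ClauseS], [SolveS],
   [TrueS] are the names used by the meta-interpreter / clause encoding;
   [Usr n] are all the other names. *)
Inductive sym : Type := Comma | ClauseS | SolveS | TrueS | Usr (n : nat).

Inductive term : Type :=
| Var (x : nat)
| Fn (f : sym) (args : list term).

Definition is_atom (t : term) : Prop :=
  match t with Var _ => False | Fn _ _ => True end.

Definition substitution := nat -> term.

Fixpoint subst (s : substitution) (t : term) : term :=
  match t with
  | Var x => s x
  | Fn f l => Fn f (map (subst s) l)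
  end.

Fixpoint vars (t : term) : list nat :=
  match t with
  | Var x => [x]
  | Fn _ l => flat_map vars l
  end.

Definition variant (a b : term) : Prop :=
  exists s r : substitution, subst s a = b /\ subst r b = a.

Definition is_mgu (th : substitution) (a b : term) : Prop :=
  subst th a = subst th b /\
  forall s : substitution, subst s a = subst s b ->
    exists eta : substitution, forall x, s x = subst eta (th x).

Record clause : Type := mkClause { head : term; body : list term }.
Definition program := list clause.

Definition subst_cl (s : substitution) (c : clause) : clause :=
  mkClause (subst s (head c)) (map (subst s) (body c)).

Definition cl_vars (c : clause) : list nat :=
  vars (head c) ++ flat_map vars (body c).

Definition cl_variant (c c' : clause) : Prop :=
  exists s r : substitution, subst_cl s c = c' /\ subst_cl r c' = c.

Inductive ld_step (P : program) : list term -> list term -> Prop :=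
| ld_step_intro : forall (A : term) (G : list term) (c c' : clause)
    (th : substitution),
    In c P ->
    cl_variant c c' ->
    (forall x, In x (cl_vars c') -> ~ In x (flat_map vars (A :: G))) ->
    is_mgu th A (head c') ->
    ld_step P (A :: G) (map (subst th) (body c' ++ G)).

Definition ld_reach (P : program) (Q R : list term) : Prop :=
  clos_refl_trans_1n (list term) (ld_step P) Q R.

Definition Call (P : program) (Q : term) (A : term) : Prop :=
  exists A' G, ld_reach P [Q] (A' :: G) /\ variant A A'.

(* The language of P: the symbols ,/2, clause, solve (any arity) and the
   constant true (used to encode empty bodies) do not occur in it. *)
Definition reservedb (f : sym) (n : nat) : bool :=
  match f with
  | Comma => Nat.eqb n 2
  | ClauseS => true
  | SolveS => true
  | TrueS => Nat.eqb n 0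
  | Usr _ => false
  end.

Fixpoint in_lang (t : term) : bool :=
  match t with
  | Var _ => true
  | Fn f l => negb (reservedb f (length l)) && forallb in_lang l
  end.

(* A in B^E_P: an atom of the language of P (B^E_P is taken modulo variance,
   and the statement below is invariant under variance). *)
Definition in_BE (A : term) : Prop := is_atom A /\ in_lang A = true.

Definition definite_program (P : program) : Prop :=
  forall c, In c P -> in_BE (head c) /\ forall b, In b (body c) -> in_BE b.

Definition trueT : term := Fn TrueS [].
Definition conjT (a b : term) : term := Fn Comma [a; b].
Definition solveT (a : term) : term := Fn SolveS [a].
Definition clauseT (h b : term) : term := Fn ClauseS [h; b].

Fixpoint enc_body (l : list term) : term :=
  match l with
  | [] => trueT
  | [b] => b
  | b :: bs => conjT b (enc_body bs)
  end.

Definition ce (P : program) : program :=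
  map (fun c => mkClause (clauseT (head c) (enc_body (body c))) []) P.

Definition M0 : program :=
  [ mkClause (solveT trueT) [];
    mkClause (solveT (conjT (Var 0) (Var 1))) [solveT (Var 0); solveT (Var 1)];
    mkClause (solveT (Var 0)) [clauseT (Var 0) (Var 1); solveT (Var 1)] ].

From Pilot Require Import Defs.
From Stdlib Require Import List Bool Lia PeanoNat.
Import ListNotations.

(* The meta-interpreter runs an LD-derivation of [P] in lock-step.  A query
   [B1, ..., Bn] of [P] is represented by meta-level goals
   [solve(E1), ..., solve(Ek)] whose encoded conjunctions concatenate to
   [B1, ..., Bn]; the clauses for [solve(true)] and [solve((A, B))] bring
   [solve(B1)] to the front, and one resolution step of [P] on [B1] is mimicked
   by selecting [solve(B1)] with the third clause of [M0] and then
   [clause(B1, Y)] with the fact of [ce(P)] for the chosen clause.  For (2), every query reachable at the meta level is one of: such a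
   representation of a variant of a query reachable in [P]; the intermediate
   query [clause(B, Y), solve(Y), ...]; or a query selecting [clause(t, _)]
   with [t] headed by a reserved symbol, which fails at once.  Preservation of
   this invariant relies on LD-steps commuting with bijective renamings, so
   that reachability modulo variance is closed under LD-steps. *)

Fixpoint term_ind_forall (Pr : term -> Prop) (HV : forall x, Pr (Var x))
  (HF : forall f l, Forall Pr l -> Pr (Fn f l)) (t : term) : Pr t :=
  match t with
  | Var x => HV x
  | Fn f l => HF f l ((fix go (l : list term) : Forall Pr l :=
                        match l with
                        | [] => Forall_nil _
                        | t :: l => Forall_cons _ (term_ind_forall Pr HV HF t) (go l)
                        end) l)
  end.

(* [vars (Fn f l)] is [flat_map vars l] and [subst s (Fn f l)] is
   [Fn f (map (subst s) l)], so facts about terms transfer to term lists by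
   wrapping the list in a dummy function symbol. *)
Definition tuple (l : list term) : term := Fn TrueS l.

Lemma subst_subst s1 s2 t :
  subst s2 (subst s1 t) = subst (fun x => subst s2 (s1 x)) t.
Proof.
  induction t using term_ind_forall; simpl; auto.
  f_equal. rewrite map_map. induction H; simpl; f_equal; auto.
Qed.

Lemma map_subst_subst s1 s2 l :
  map (subst s2) (map (subst s1) l) = map (subst (fun x => subst s2 (s1 x))) l.
Proof. rewrite map_map. apply map_ext. intros; apply subst_subst. Qed.

Lemma subst_ext_in s1 s2 t :
  (forall x, In x (vars t) -> s1 x = s2 x) -> subst s1 t = subst s2 t.
Proof.
  induction t using term_ind_forall; simpl; intros Hx; auto.
  f_equal. induction H; simpl in *; auto.
  rewrite H, IHForall; auto; intros; apply Hx, in_or_app; auto.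
Qed.

Lemma map_subst_ext_in s1 s2 l :
  (forall x, In x (flat_map vars l) -> s1 x = s2 x) -> map (subst s1) l = map (subst s2) l.
Proof. intros H. apply (subst_ext_in s1 s2 (tuple l)) in H. now injection H. Qed.

Lemma subst_Var t : subst Var t = t.
Proof.
  induction t using term_ind_forall; simpl; auto.
  f_equal. induction H; simpl; f_equal; auto.
Qed.

Lemma map_subst_Var l : map (subst Var) l = l.
Proof. pose proof (subst_Var (tuple l)). now injection H. Qed.

Lemma subst_fixed s t : (forall x, In x (vars t) -> s x = Var x) -> subst s t = t.
Proof. intros H. rewrite <- (subst_Var t) at 2. now apply subst_ext_in. Qed.

Lemma map_subst_fixed s l :
  (forall x, In x (flat_map vars l) -> s x = Var x) -> map (subst s) l = l.
Proof. intros H. apply (subst_fixed s (tuple l)) in H. now injection H. Qed.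

Lemma in_vars_subst s t y :
  In y (vars (subst s t)) <-> exists x, In x (vars t) /\ In y (vars (s x)).
Proof.
  induction t using term_ind_forall; simpl.
  - split; [intros; exists x; auto | intros [x' [[<-|[]] Hy]]; auto].
  - induction H; simpl; [firstorder|].
    rewrite in_app_iff, H, IHForall. setoid_rewrite in_app_iff. firstorder.
Qed.

Lemma in_vars_map_subst s l y :
  In y (flat_map vars (map (subst s) l)) <->
  exists x, In x (flat_map vars l) /\ In y (vars (s x)).
Proof. exact (in_vars_subst s (tuple l) y). Qed.

Lemma subst_eq_in_vars s1 s2 t x :
  subst s1 t = subst s2 t -> In x (vars t) -> s1 x = s2 x.
Proof.
  induction t using term_ind_forall; simpl; intros E Hx.
  - destruct Hx as [<-|[]]; auto.
  - injection E as E. induction H; simpl in *; [contradiction|].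
    injection E as E1 E2. apply in_app_or in Hx as [Hx|Hx]; auto.
Qed.

Lemma map_subst_eq_in_vars s1 s2 l x :
  map (subst s1) l = map (subst s2) l -> In x (flat_map vars l) -> s1 x = s2 x.
Proof. intros E. apply (subst_eq_in_vars s1 s2 (tuple l)). simpl; now rewrite E. Qed.

Lemma subst_enc_body s L : subst s (enc_body L) = enc_body (map (subst s) L).
Proof.
  induction L as [|a [|b L] IH]; auto.
  change (conjT (subst s a) (subst s (enc_body (b :: L))) =
          enc_body (subst s a :: subst s b :: map (subst s) L)).
  now rewrite IH.
Qed.

Lemma in_vars_enc_body L x : In x (vars (enc_body L)) <-> In x (flat_map vars L).
Proof.
  induction L as [|a [|b L] IH]; simpl; [tauto| |].
  - now rewrite app_nil_r.
  - simpl in IH. rewrite app_nil_r, !in_app_iff, IH, in_app_iff. tauto.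
Qed.

Lemma bounded_list (l : list nat) : exists N, forall x, In x l -> x < N.
Proof.
  induction l as [|a l [N HN]]; [exists 0; simpl; tauto|].
  exists (S (Nat.max a N)). intros x [<-|Hx]; [|specialize (HN x Hx)]; lia.
Qed.

Definition upd (s : substitution) (x : nat) (t : term) : substitution :=
  fun y => if y =? x then t else s y.

Lemma upd_eq s x t : upd s x t x = t.
Proof. unfold upd; now rewrite Nat.eqb_refl. Qed.

Lemma upd_neq s x t y : y <> x -> upd s x t y = s y.
Proof. unfold upd; intros H; apply Nat.eqb_neq in H; now rewrite H. Qed.

Lemma subst_cl_subst_cl s1 s2 c :
  subst_cl s2 (subst_cl s1 c) = subst_cl (fun x => subst s2 (s1 x)) c.
Proof. unfold subst_cl; simpl. now rewrite subst_subst, map_subst_subst. Qed.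

Definition ren (p : nat -> nat) : substitution := fun x => Var (p x).

Section BijectiveRenaming.

Variables p q : nat -> nat.
Hypothesis qp : forall x, q (p x) = x.
Hypothesis pq : forall x, p (q x) = x.

Lemma subst_ren_cancel t : subst (ren q) (subst (ren p) t) = t.
Proof.
  rewrite subst_subst. apply subst_fixed. intros x _. unfold ren; simpl. now rewrite qp.
Qed.

Lemma subst_cl_ren_cancel c : subst_cl (ren q) (subst_cl (ren p) c) = c.
Proof.
  destruct c as [h b]; unfold subst_cl; simpl. rewrite subst_ren_cancel.
  pose proof (subst_ren_cancel (tuple b)) as E. simpl in E. now injection E as ->.
Qed.

Lemma in_vars_ren t y : In y (vars (subst (ren p) t)) <-> In (q y) (vars t).
Proof.
  rewrite in_vars_subst. unfold ren; simpl. split.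
  - intros [x [Hx [<-|[]]]]. now rewrite qp.
  - intros H. exists (q y). rewrite pq. auto.
Qed.

Lemma cl_variant_ren c c' : cl_variant c c' -> cl_variant c (subst_cl (ren p) c').
Proof.
  intros [s [r [<- E]]].
  exists (fun x => subst (ren p) (s x)), (fun x => subst r (ren q x)). split.
  - now rewrite subst_cl_subst_cl.
  - now rewrite <- subst_cl_subst_cl, subst_cl_ren_cancel.
Qed.

Lemma is_mgu_ren th A h :
  is_mgu th A h ->
  is_mgu (fun x => subst (ren p) (th (q x))) (subst (ren p) A) (subst (ren p) h).
Proof.
  intros [Hu Hg].
  assert (Hconj : forall t, subst (fun x => subst (ren p) (th (q x))) (subst (ren p) t) =
                            subst (ren p) (subst th t)).
  { intros t. rewrite !subst_subst. apply subst_ext_in. intros x _.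
    unfold ren; simpl. now rewrite qp. }
  split; [now rewrite !Hconj, Hu|].
  intros u Eu. rewrite !subst_subst in Eu. destruct (Hg (fun x => u (p x)) Eu) as [eta Heta].
  exists (fun y => eta (q y)). intros x. rewrite <- (pq x) at 1. rewrite Heta, subst_subst.
  apply subst_ext_in. intros y _. unfold ren; simpl. now rewrite qp.
Qed.

Lemma ld_step_ren P G G' :
  ld_step P G G' -> ld_step P (map (subst (ren p)) G) (map (subst (ren p)) G').
Proof.
  intros [A G0 c c' th Hin Hv Hfr Hmgu].
  set (th' := fun x => subst (ren p) (th (q x))).
  replace (map (subst (ren p)) (map (subst th) (body c' ++ G0))) with
    (map (subst th') (body (subst_cl (ren p) c') ++ map (subst (ren p)) G0)).
  - apply ld_step_intro with c; [assumption | now apply cl_variant_ren | | now apply is_mgu_ren].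
    intros x Hx Hx'.
    change (In x (vars (subst (ren p) (tuple (Defs.head c' :: body c'))))) in Hx.
    change (In x (vars (subst (ren p) (tuple (A :: G0))))) in Hx'.
    rewrite in_vars_ren in Hx, Hx'. exact (Hfr _ Hx Hx').
  - unfold subst_cl; simpl. rewrite <- map_app, !map_subst_subst. apply map_ext. intros t.
    apply subst_ext_in. intros x _. unfold th', ren; simpl. now rewrite qp.
Qed.

End BijectiveRenaming.

Definition swap (a b z : nat) : nat := if z =? a then b else if z =? b then a else z.

Lemma swap_involutive a b z : swap a b (swap a b z) = z.
Proof.
  unfold swap. destruct (Nat.eqb_spec z a) as [Ha|Ha].
  - destruct (Nat.eqb_spec b a); [congruence|]. now rewrite Nat.eqb_refl.
  - destruct (Nat.eqb_spec z b) as [Hb|Hb]; [now rewrite Nat.eqb_refl|].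
    apply Nat.eqb_neq in Ha, Hb. now rewrite Ha, Hb.
Qed.

(* Each step adds one point to the domain and fixes it with a transposition. *)
Lemma injective_on_extends_to_bijection (D : list nat) (f : nat -> nat) :
  (forall x y, In x D -> In y D -> f x = f y -> x = y) ->
  exists p q, (forall x, q (p x) = x) /\ (forall x, p (q x) = x) /\
              (forall x, In x D -> p x = f x).
Proof.
  induction D as [|x D IH]; intros Hinj.
  { exists (fun z => z), (fun z => z). simpl; tauto. }
  destruct IH as [p [q [Hqp [Hpq Hpf]]]]; [intros; apply Hinj; simpl; auto|].
  destruct (in_dec Nat.eq_dec x D).
  { exists p, q. repeat split; auto. intros z [<-|?]; auto. }
  exists (fun z => swap (f x) (p x) (p z)), (fun z => q (swap (f x) (p x) z)).
  repeat split.
  - intros z. now rewrite swap_involutive.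
  - intros z. now rewrite Hpq, swap_involutive.
  - intros z [<-|Hz]; unfold swap.
    + rewrite Nat.eqb_refl. now destruct (Nat.eqb_spec (p x) (f x)).
    + rewrite (Hpf z Hz). destruct (Nat.eqb_spec (f z) (f x)) as [E|].
      { apply Hinj in E; simpl; auto. now subst. }
      destruct (Nat.eqb_spec (f z) (p x)) as [E|]; auto.
      rewrite <- (Hpf z Hz) in E. apply (f_equal q) in E. rewrite !Hqp in E. now subst.
Qed.

Definition query_variant (G1 G2 : list term) : Prop :=
  exists s r, map (subst s) G1 = G2 /\ map (subst r) G2 = G1.

Lemma variant_trans a b c : variant a b -> variant b c -> variant a c.
Proof.
  intros [s [r [<- E2]]] [s' [r' [<- E4]]].
  exists (fun x => subst s' (s x)), (fun x => subst r (r' x)).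
  rewrite <- !subst_subst. now rewrite E4.
Qed.

Lemma query_variant_refl G : query_variant G G.
Proof. exists Var, Var. now rewrite map_subst_Var. Qed.

Lemma query_variant_sym G1 G2 : query_variant G1 G2 -> query_variant G2 G1.
Proof. intros [s [r [? ?]]]; now exists r, s. Qed.

Lemma query_variant_trans G1 G2 G3 :
  query_variant G1 G2 -> query_variant G2 G3 -> query_variant G1 G3.
Proof.
  intros [s [r [<- E2]]] [s' [r' [<- E4]]].
  exists (fun x => subst s' (s x)), (fun x => subst r (r' x)).
  rewrite <- !map_subst_subst. now rewrite E4.
Qed.

(* The substitution witnessing a variance maps the variables of [G1]
   injectively to variables; extend it to a bijection of all variables. *)
Lemma query_variant_bij_ren G1 G2 :
  query_variant G1 G2 ->
  exists p q, (forall x, q (p x) = x) /\ (forall x, p (q x) = x) /\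
              map (subst (ren p)) G1 = G2.
Proof.
  intros [s [r [E1 E2]]].
  assert (Hrs : forall x, In x (flat_map vars G1) -> subst r (s x) = Var x).
  { intros x. apply (map_subst_eq_in_vars (fun y => subst r (s y)) Var).
    now rewrite <- map_subst_subst, E1, E2, map_subst_Var. }
  set (f := fun x => match s x with Var y => y | _ => 0 end).
  assert (Hf : forall x, In x (flat_map vars G1) -> s x = Var (f x)).
  { intros x Hx. specialize (Hrs x Hx). unfold f. now destruct (s x). }
  destruct (injective_on_extends_to_bijection (flat_map vars G1) f) as [p [q [Hqp [Hpq Hpf]]]].
  { intros x y Hx Hy E. assert (Var x = Var y) as [= ->]; auto.
    rewrite <- (Hrs x Hx), <- (Hrs y Hy), (Hf x Hx), (Hf y Hy), E. reflexivity. }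
  exists p, q. repeat split; auto. rewrite <- E1. apply map_subst_ext_in.
  intros x Hx. unfold ren. now rewrite Hpf, Hf.
Qed.

Lemma ld_reach_step P X Y Z : ld_reach P X Y -> ld_step P Y Z -> ld_reach P X Z.
Proof.
  unfold ld_reach. intros H; induction H; intros.
  - econstructor; eauto. constructor.
  - econstructor; eauto.
Qed.

Definition reachable_mod_variance (P : program) (Q : term) (G : list term) : Prop :=
  exists G0, ld_reach P [Q] G0 /\ query_variant G G0.

Lemma reachable_mod_variance_variant P Q G G' :
  reachable_mod_variance P Q G -> query_variant G G' -> reachable_mod_variance P Q G'.
Proof.
  intros [G0 [? ?]] ?. exists G0; split; auto.
  eapply query_variant_trans; eauto using query_variant_sym.
Qed.

Lemma reachable_mod_variance_step P Q G G' :
  reachable_mod_variance P Q G -> ld_step P G G' -> reachable_mod_variance P Q G'.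
Proof.
  intros [G0 [HR HV]] Hs. destruct (query_variant_bij_ren _ _ HV) as [p [q [Hqp [Hpq <-]]]].
  exists (map (subst (ren p)) G'). split.
  - eapply ld_reach_step; eauto. now apply ld_step_ren with q.
  - exists (ren p), (ren q). split; auto.
    pose proof (subst_ren_cancel p q Hqp (tuple G')) as E. simpl in E. now injection E.
Qed.

Lemma subst_upd_notin s x u t : ~ In x (vars t) -> subst (upd s x u) t = subst s t.
Proof. intros H; apply subst_ext_in; intros y Hy; apply upd_neq; congruence. Qed.

Lemma matcher_is_mgu th A h :
  (forall x, ~ In x (vars h) -> th x = Var x) ->
  (forall x, In x (vars h) -> ~ In x (vars A)) ->
  subst th h = A -> is_mgu th A h.
Proof.
  intros Hout Hdisj Hmatch.
  assert (HA : subst th A = A).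
  { apply subst_fixed. intros x Hx. apply Hout. intros Hh. exact (Hdisj x Hh Hx). }
  split; [congruence|].
  intros u Eu. exists u. intros x. destruct (in_dec Nat.eq_dec x (vars h)) as [Hx|Hx].
  - symmetry. apply (subst_eq_in_vars (fun y => subst u (th y)) u h); auto.
    now rewrite <- subst_subst, Hmatch.
  - now rewrite Hout.
Qed.

Lemma is_mgu_bind_fresh th f B h Y e :
  is_mgu th B h -> ~ In Y (vars B) -> ~ In Y (vars h) -> ~ In Y (vars e) ->
  is_mgu (upd th Y (subst th e)) (Fn f [B; Var Y]) (Fn f [h; e]).
Proof.
  intros [Hu Hg] HB Hh He. split.
  - simpl. now rewrite !subst_upd_notin, upd_eq, Hu.
  - intros u Eu. injection Eu as EuB EuY. destruct (Hg u EuB) as [eta Heta].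
    exists eta. intros x. destruct (Nat.eq_dec x Y) as [->|Hx].
    + rewrite upd_eq, EuY, subst_subst. apply subst_ext_in; auto.
    + now rewrite upd_neq.
Qed.

Lemma injection_avoiding (Y N : nat) :
  Y < N ->
  exists g ginv : nat -> nat, (forall x, ginv (g x) = x) /\ (forall x, g x <> Y) /\
                              (forall x, x < N -> x <> Y -> g x = x).
Proof.
  intros HY.
  exists (fun x => if x =? Y then N else if x <? N then x else S x),
         (fun z => if z =? N then Y else if z <? N then z else pred z).
  repeat split; intros x; try intros H1 H2;
    destruct (Nat.eqb_spec x Y), (Nat.ltb_spec x N);
    repeat (cbv beta iota; match goal with
                 | |- context [?a =? ?b] => destruct (Nat.eqb_spec a b)
                 | |- context [?a <? ?b] => destruct (Nat.ltb_spec a b)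
                 end); lia.
Qed.

(* [sg Y] is forced to the instance of [e], so [sg] is not itself an mgu of
   [B] and [h]; composing with an injection that moves [Y] out of the way
   frees that variable again. *)
Lemma is_mgu_forget_bound_var sg f B h Y e (D : list nat) :
  is_mgu sg (Fn f [B; Var Y]) (Fn f [h; e]) ->
  ~ In Y (vars B ++ vars h ++ vars e ++ D) ->
  exists tau, is_mgu tau B h /\ forall x, In x (vars B ++ vars h ++ D) -> tau x = sg x.
Proof.
  intros [Hu Hg] HY. injection Hu as HuB _.
  set (V := vars B ++ vars h ++ vars e ++ D) in *.
  destruct (bounded_list (Y :: V)) as [N HN].
  destruct (injection_avoiding Y N) as [g [ginv [Hgg [HgY Hgid]]]]; [apply HN; now left|].
  assert (HgV : forall x, In x V -> g x = x).
  { intros x Hx. apply Hgid; [apply HN; now right | congruence]. }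
  exists (fun x => sg (g x)). split.
  2:{ intros x Hx. rewrite HgV; auto. unfold V. rewrite !in_app_iff in *. tauto. }
  assert (Hsub : forall t, (forall x, In x (vars t) -> In x V) ->
                 subst (fun x => sg (g x)) t = subst sg t).
  { intros t Ht. apply subst_ext_in. intros x Hx. now rewrite HgV by auto. }
  assert (HVB : forall x, In x (vars B) -> In x V)
    by (intros; unfold V; rewrite !in_app_iff; auto).
  assert (HVh : forall x, In x (vars h) -> In x V)
    by (intros; unfold V; rewrite !in_app_iff; auto).
  assert (HVe : forall x, In x (vars e) -> In x V)
    by (intros; unfold V; rewrite !in_app_iff; auto).
  split; [now rewrite !Hsub|].
  intros u Eu.
  set (u' := fun z => if z =? Y then subst u e else u (ginv z)).
  assert (Hu' : forall t, (forall x, In x (vars t) -> In x V) -> subst u' t = subst u t).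
  { intros t Ht. apply subst_ext_in. intros x Hx. unfold u'.
    destruct (Nat.eqb_spec x Y) as [->|]; [exfalso; auto|].
    now rewrite <- (HgV x (Ht x Hx)), Hgg, HgV by auto. }
  destruct (Hg u') as [eta Heta].
  { simpl. rewrite !Hu' by auto. unfold u' at 1. now rewrite Nat.eqb_refl, Eu. }
  exists eta. intros x. rewrite <- Heta. unfold u'.
  destruct (Nat.eqb_spec (g x) Y) as [E|]; [now destruct (HgY x)|]. now rewrite Hgg.
Qed.

Definition shift (N : nat) : substitution := fun x => Var (N + x).

Lemma in_vars_shift N t x : In x (vars (subst (shift N) t)) -> N <= x.
Proof. rewrite in_vars_subst. intros [y [_ [<-|[]]]]. lia. Qed.

Lemma cl_variant_shift N c : cl_variant c (subst_cl (shift N) c).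
Proof.
  exists (shift N), (fun x => Var (x - N)). split; auto.
  rewrite subst_cl_subst_cl. destruct c as [h b]; unfold subst_cl; simpl.
  f_equal; [apply subst_fixed | apply map_subst_fixed]; intros; simpl; f_equal; lia.
Qed.

Lemma ld_step_matching P c A R N th :
  In c P ->
  (forall x, In x (flat_map vars (A :: R)) -> x < N) ->
  (forall x, ~ In x (vars (Defs.head (subst_cl (shift N) c))) -> th x = Var x) ->
  subst th (Defs.head (subst_cl (shift N) c)) = A ->
  ld_step P (A :: R) (map (subst th) (body (subst_cl (shift N) c)) ++ R).
Proof.
  intros Hc HN Hout Hmatch.
  set (c' := subst_cl (shift N) c) in *.
  assert (Hge : forall x, In x (cl_vars c') -> N <= x).
  { intros x Hx. exact (in_vars_shift N (tuple (Defs.head c :: body c)) x Hx). }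
  assert (HA : forall x, In x (vars A) -> x < N) by (intros; apply HN, in_or_app; auto).
  assert (HR : map (subst th) R = R).
  { apply map_subst_fixed. intros x Hx. apply Hout. intros Hh.
    assert (N <= x) by (apply Hge, in_or_app; auto).
    assert (x < N) by (apply HN, in_or_app; auto). lia. }
  rewrite <- HR at 2. rewrite <- map_app.
  apply ld_step_intro with c; [assumption | apply cl_variant_shift | |].
  - intros x Hx Hx'. apply Hge in Hx. apply HN in Hx'. lia.
  - apply matcher_is_mgu; auto. intros x Hh Hx.
    assert (N <= x) by (apply Hge, in_or_app; auto). apply HA in Hx. lia.
Qed.

Definition solve_true_cl : clause := mkClause (solveT trueT) [].
Definition solve_conj_cl : clause :=
  mkClause (solveT (conjT (Var 0) (Var 1))) [solveT (Var 0); solveT (Var 1)].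
Definition solve_clause_cl : clause :=
  mkClause (solveT (Var 0)) [clauseT (Var 0) (Var 1); solveT (Var 1)].

Definition ce_clause (c : clause) : clause :=
  mkClause (clauseT (Defs.head c) (enc_body (body c))) [].

Definition solve_body (L : list term) : term := solveT (enc_body L).

Lemma subst_cl_ce_clause s c : subst_cl s (ce_clause c) = ce_clause (subst_cl s c).
Proof. destruct c; unfold ce_clause, subst_cl; simpl. now rewrite subst_enc_body. Qed.

Lemma in_cl_vars_ce_clause c x : In x (cl_vars (ce_clause c)) <-> In x (cl_vars c).
Proof.
  unfold cl_vars, ce_clause; simpl. rewrite !app_nil_r, !in_app_iff, in_vars_enc_body. tauto.
Qed.

Lemma map_solve_body s Ls :
  map (subst s) (map solve_body Ls) = map solve_body (map (map (subst s)) Ls).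
Proof.
  induction Ls; simpl; f_equal; auto. unfold solve_body, solveT; simpl. now rewrite subst_enc_body.
Qed.

Lemma in_vars_solve_body Ls x :
  In x (flat_map vars (map solve_body Ls)) <-> In x (flat_map vars (concat Ls)).
Proof.
  induction Ls; simpl; [tauto|]. rewrite !in_app_iff, IHLs, flat_map_app, in_app_iff.
  unfold solve_body, solveT; simpl. rewrite ?app_nil_r, in_vars_enc_body. tauto.
Qed.

Lemma concat_map_map_subst s Ls : concat (map (map (subst s)) Ls) = map (subst s) (concat Ls).
Proof. induction Ls; simpl; auto. now rewrite map_app, IHLs. Qed.

Lemma subst_solve_body_fixed u L1 Ls :
  (forall x, In x (flat_map vars (concat (L1 :: Ls))) -> u x = Var x) ->
  subst u (solve_body L1) = solve_body L1.
Proof.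
  intros Hu. apply subst_fixed. intros x Hx.
  apply Hu, in_vars_solve_body. simpl. now apply in_or_app; left.
Qed.

Section MetaSimulation.

Variable P : program.
Local Notation MP := (M0 ++ ce P).

Lemma In_M0 c : In c M0 -> In c MP.
Proof. intros; apply in_or_app; auto. Qed.

Lemma In_ce_clause c : In c P -> In (ce_clause c) MP.
Proof. intros H. apply in_or_app; right. now apply in_map. Qed.

Lemma ld_step_solve_true R : ld_step MP (solveT trueT :: R) R.
Proof.
  destruct (bounded_list (flat_map vars (solveT trueT :: R))) as [N HN].
  apply (ld_step_matching MP solve_true_cl _ R N Var); simpl; auto.
Qed.

Lemma ld_step_solve_conj a e R :
  ld_step MP (solveT (conjT a e) :: R) (solveT a :: solveT e :: R).
Proof.
  destruct (bounded_list (flat_map vars (solveT (conjT a e) :: R))) as [N HN].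
  apply (ld_step_matching MP solve_conj_cl _ R N (upd (upd Var (N + 1) e) (N + 0) a)) in HN;
    [| apply In_M0; simpl; auto | |].
  - simpl in HN. now rewrite upd_eq, upd_neq, upd_eq in HN by lia.
  - intros x Hx. simpl in Hx. now rewrite !upd_neq by (intros ->; tauto).
  - simpl. now rewrite upd_eq, upd_neq, upd_eq by lia.
Qed.

Lemma ld_step_solve_clause B R N :
  (forall x, In x (flat_map vars (solveT B :: R)) -> x < N) ->
  ld_step MP (solveT B :: R) (clauseT B (Var (N + 1)) :: solveT (Var (N + 1)) :: R).
Proof.
  intros HN.
  apply (ld_step_matching MP solve_clause_cl _ R N (upd Var (N + 0) B)) in HN;
    [| apply In_M0; simpl; auto | |].
  - simpl in HN. now rewrite upd_eq, upd_neq in HN by lia.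
  - intros x Hx. simpl in Hx. now rewrite !upd_neq by (intros ->; tauto).
  - simpl. now rewrite upd_eq.
Qed.

Lemma ld_step_clause_fact c c' th B R Y :
  In c P -> cl_variant c c' ->
  (forall x, In x (cl_vars c') -> ~ In x (flat_map vars (B :: R))) ->
  is_mgu th B (Defs.head c') ->
  ~ In Y (flat_map vars (B :: R)) -> ~ In Y (cl_vars c') ->
  ld_step MP (clauseT B (Var Y) :: solveT (Var Y) :: R)
             (solve_body (map (subst th) (body c')) :: map (subst th) R).
Proof.
  intros Hc [s [r [<- E]]] Hfr Hmgu HY HYc. set (c' := subst_cl s c) in *.
  assert (HYh : ~ In Y (vars (Defs.head c'))) by (intros H; apply HYc, in_or_app; auto).
  assert (HYe : ~ In Y (vars (enc_body (body c')))).
  { rewrite in_vars_enc_body. intros H; apply HYc, in_or_app; auto. }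
  simpl in HY. rewrite in_app_iff in HY.
  set (th' := upd th Y (subst th (enc_body (body c')))).
  replace (solve_body _ :: map (subst th) R)
    with (map (subst th') (body (ce_clause c') ++ solveT (Var Y) :: R)).
  - apply (ld_step_intro MP _ _ (ce_clause c) (ce_clause c')); [now apply In_ce_clause | | |].
    + exists s, r. now rewrite !subst_cl_ce_clause, E.
    + intros x Hx Hx'. rewrite in_cl_vars_ce_clause in Hx. apply (Hfr x Hx).
      simpl in Hx' |- *. rewrite !in_app_iff in *. simpl in Hx'.
      destruct Hx' as [[?|[<-|[]]]|[<-|?]]; tauto.
    + apply is_mgu_bind_fresh; tauto.
  - simpl. rewrite (map_subst_ext_in th' th R) by (intros x Hx; apply upd_neq; intros ->; tauto).
    unfold th', solve_body, solveT. now rewrite upd_eq, subst_enc_body.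
Qed.

Lemma ld_reach_solve_first X Ls B G :
  concat Ls = B :: G -> ld_reach MP X (map solve_body Ls) ->
  exists Ls', concat Ls' = G /\ ld_reach MP X (solveT B :: map solve_body Ls').
Proof.
  revert B G. induction Ls as [|[|b [|b' bs]] Ls IH]; intros B G E HR; simpl in E.
  - discriminate.
  - apply (IH B G E). eapply ld_reach_step; [exact HR|]. apply ld_step_solve_true.
  - injection E as <- <-. now exists Ls.
  - injection E as <- E. exists ((b' :: bs) :: Ls). split; auto.
    eapply ld_reach_step; [exact HR|]. apply ld_step_solve_conj.
Qed.

(* [G] is represented by a list of blocks, each of which is the body of a
   clause waiting as one [solve] goal of the meta-level query. *)
Definition simulated (X G : list term) : Prop :=
  exists Ls, concat Ls = G /\ ld_reach MP X (map solve_body Ls).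

Lemma simulated_step X G G' : ld_step P G G' -> simulated X G -> simulated X G'.
Proof.
  intros [B G0 c c' th Hin Hv Hfr Hmgu] [Ls [E HR]].
  destruct (ld_reach_solve_first X Ls B G0 E HR) as [Ls0 [<- HR0]].
  set (R := map solve_body Ls0) in *.
  assert (HRv : forall x, In x (flat_map vars R) <-> In x (flat_map vars (concat Ls0)))
    by apply in_vars_solve_body.
  destruct (bounded_list (flat_map vars (solveT B :: R) ++ cl_vars c')) as [N HN].
  assert (HY : ~ In (N + 1) (flat_map vars (solveT B :: R) ++ cl_vars c'))
    by (intros H; apply HN in H; lia).
  simpl in HY. rewrite app_nil_r, !in_app_iff in HY.
  exists (map (subst th) (body c') :: map (map (subst th)) Ls0). split.
  - simpl. now rewrite concat_map_map_subst, map_app.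
  - eapply ld_reach_step; [eapply ld_reach_step; [exact HR0|]|].
    + apply ld_step_solve_clause. intros; apply HN, in_or_app; auto.
    + simpl. rewrite <- map_solve_body. apply ld_step_clause_fact with c; auto.
      * intros x Hx Hx'. apply (Hfr x Hx). simpl in Hx' |- *.
        rewrite in_app_iff in Hx' |- *. fold R in Hx'. now rewrite <- HRv.
      * simpl. fold R. rewrite in_app_iff. tauto.
Qed.

Lemma ld_reach_simulated Q G : ld_reach P [Q] G -> simulated [solveT Q] G.
Proof.
  intros H. assert (Hinit : simulated [solveT Q] [Q]) by (exists [[Q]]; split; constructor).
  revert Hinit. induction H; auto. intros. apply IHclos_refl_trans_1n.
  eapply simulated_step; eauto.
Qed.

Lemma Call_meta_of_Call Q A :
  Call P Q A -> exists A', Call MP (solveT Q) (solveT A') /\ variant A A'.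
Proof.
  intros [A' [G [HR HV]]]. destruct (ld_reach_simulated Q _ HR) as [Ls [E HR']].
  destruct (ld_reach_solve_first _ Ls A' G E HR') as [Ls' [_ HR'']].
  exists A'. split; auto. exists (solveT A'), (map solve_body Ls'). split; auto.
  exists Var, Var. now rewrite subst_Var.
Qed.

End MetaSimulation.

Lemma singleton_cases {A : Type} (L : list A) : (exists b, L = [b]) \/ forall b, L <> [b].
Proof. destruct L as [|b [|b' L]]; [right | left | right]; eauto; congruence. Qed.

(* Unlike [in_BE], these only inspect the head symbol, so they are stable under
   substitution. *)
Definition user_atom (t : term) : Prop :=
  match t with Var _ => False | Fn f l => reservedb f (length l) = false end.

Definition reserved_atom (t : term) : Prop :=
  match t with Var _ => False | Fn f l => reservedb f (length l) = true end.

Lemma user_atom_subst s t : user_atom t -> user_atom (subst s t).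
Proof. destruct t; simpl; [tauto|]. now rewrite length_map. Qed.

Lemma reserved_atom_subst s t : reserved_atom t -> reserved_atom (subst s t).
Proof. destruct t; simpl; [tauto|]. now rewrite length_map. Qed.

Lemma user_atom_not_reserved t : user_atom t -> reserved_atom t -> False.
Proof. destruct t; simpl; congruence. Qed.

Lemma subst_user_atom_neq s t u : user_atom t -> reserved_atom u -> subst s t <> u.
Proof.
  intros Ht Hu E. apply (user_atom_not_reserved u); auto.
  rewrite <- E. now apply user_atom_subst.
Qed.

Lemma in_BE_user_atom t : in_BE t -> user_atom t.
Proof.
  intros [H1 H2]; destruct t; simpl in *; auto.
  apply andb_prop in H2 as [H2 _]. now apply negb_true_iff in H2.
Qed.

Lemma Forall_user_atom_map_subst s l :
  Forall user_atom l -> Forall user_atom (map (subst s) l).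
Proof. intros H. apply Forall_map. eapply Forall_impl; [|exact H]. apply user_atom_subst. Qed.

Lemma reserved_enc_body L : (forall b, L <> [b]) -> reserved_atom (enc_body L).
Proof. destruct L as [|b [|b' L]]; simpl; auto. intros H. now destruct (H b). Qed.

Lemma is_mgu_renames sg t1 t2 u G :
  is_mgu sg t1 t2 -> subst u t1 = subst u t2 ->
  (forall x, In x (flat_map vars G) -> u x = Var x) -> query_variant G (map (subst sg) G).
Proof.
  intros [_ Hg] Hu Hx. destruct (Hg u Hu) as [eta Heta].
  exists sg, eta. split; auto. rewrite map_subst_subst.
  apply map_subst_fixed. intros x H. rewrite <- Heta. auto.
Qed.

Lemma is_mgu_keeps_fresh_var sg t1 t2 u b D :
  is_mgu sg t1 t2 -> subst u t1 = subst u t2 -> u b = Var b ->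
  (forall x, In x D -> u x = Var x) -> ~ In b D ->
  exists y, sg b = Var y /\ forall x, In x D -> ~ In y (vars (sg x)).
Proof.
  intros [_ Hg] Hu Hb HD HbD. destruct (Hg u Hu) as [eta Heta].
  rewrite Heta in Hb. destruct (sg b) as [y|] eqn:E; [|discriminate].
  exists y. split; auto. intros x Hx Hy. apply HbD.
  assert (In b (vars (subst eta (sg x)))) as Hbx.
  { apply in_vars_subst. exists y. simpl in Hb. rewrite Hb. simpl; auto. }
  rewrite <- Heta, HD in Hbx by auto. now destruct Hbx as [<-|[]].
Qed.

Lemma cl_variant_bij_ren c c' :
  cl_variant c c' ->
  exists p q, (forall x, q (p x) = x) /\ (forall x, p (q x) = x) /\ c' = subst_cl (ren p) c.
Proof.
  intros [s [r [<- E]]]. destruct c as [h b]. unfold subst_cl in *; simpl in *.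
  injection E as Eh Eb.
  destruct (query_variant_bij_ren (h :: b) (subst s h :: map (subst s) b)) as [p [q [Hqp [Hpq E]]]].
  { exists s, r. simpl. now rewrite Eh, Eb. }
  exists p, q. simpl in E. injection E as <- <-. auto.
Qed.

Section MetaInvariant.

Variables (P : program) (Q : term).
Hypothesis definite_P : definite_program P.
Local Notation MP := (M0 ++ ce P).

Lemma meta_clause_variant_cases c c' :
  In c MP -> cl_variant c c' ->
  exists p q, (forall x, q (p x) = x) /\ (forall x, p (q x) = x) /\
    (c' = solve_true_cl \/ c' = subst_cl (ren p) solve_conj_cl \/
     c' = subst_cl (ren p) solve_clause_cl \/
     exists c0, In c0 P /\ c' = ce_clause (subst_cl (ren p) c0)).
Proof.
  intros Hc Hv. destruct (cl_variant_bij_ren c c' Hv) as [p [q [Hqp [Hpq ->]]]].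
  exists p, q. repeat split; auto.
  apply in_app_or in Hc as [[<-|[<-|[<-|[]]]]|Hc]; auto.
  unfold ce in Hc. apply in_map_iff in Hc as [c0 [<- Hc0]].
  right; right; right. exists c0. split; auto. apply subst_cl_ce_clause.
Qed.

Inductive meta_state : list term -> Prop :=
| solving Ls :
    Forall user_atom (concat Ls) -> reachable_mod_variance P Q (concat Ls) ->
    meta_state (map solve_body Ls)
| fetching B Y Ls :
    ~ In Y (vars B) -> ~ In Y (flat_map vars (concat Ls)) ->
    user_atom B -> Forall user_atom (concat Ls) ->
    reachable_mod_variance P Q (B :: concat Ls) ->
    meta_state (clauseT B (Var Y) :: solveT (Var Y) :: map solve_body Ls)
| stuck t z R : reserved_atom t -> meta_state (Fn ClauseS [t; z] :: R).

Lemma solving_step_true L1 Ls sg :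
  Forall user_atom (concat (L1 :: Ls)) -> reachable_mod_variance P Q (concat (L1 :: Ls)) ->
  is_mgu sg (solve_body L1) (solveT trueT) ->
  meta_state (map (subst sg) (map solve_body Ls)).
Proof.
  intros Hu HR Hmgu. pose proof Hmgu as [Heq _].
  assert (L1 = []) as ->.
  { destruct L1 as [|b0 [|b1 bs]]; auto; injection Heq as Heq; [|discriminate].
    apply Forall_inv in Hu.
    exfalso; apply (subst_user_atom_neq sg b0 trueT Hu); [reflexivity | exact Heq]. }
  rewrite map_solve_body. apply solving; rewrite concat_map_map_subst.
  - now apply Forall_user_atom_map_subst.
  - apply (reachable_mod_variance_variant _ _ _ _ HR).
    exact (is_mgu_renames sg _ _ Var _ Hmgu eq_refl (fun _ _ => eq_refl)).
Qed.

Lemma solving_step_conj L1 Ls sg a b :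
  a <> b -> ~ In a (flat_map vars (concat (L1 :: Ls))) ->
  ~ In b (flat_map vars (concat (L1 :: Ls))) ->
  Forall user_atom (concat (L1 :: Ls)) -> reachable_mod_variance P Q (concat (L1 :: Ls)) ->
  is_mgu sg (solve_body L1) (solveT (conjT (Var a) (Var b))) ->
  meta_state (map (subst sg) ([solveT (Var a); solveT (Var b)] ++ map solve_body Ls)).
Proof.
  intros Hab Ha Hb Hu HR Hmgu. pose proof Hmgu as [Heq _].
  destruct L1 as [|b0 [|b1 bs]]; [discriminate| |].
  { injection Heq as Heq. apply Forall_inv in Hu.
    exfalso; apply (subst_user_atom_neq sg b0 (conjT (sg a) (sg b)) Hu);
      [reflexivity | exact Heq]. }
  change (solve_body (b0 :: b1 :: bs)) with (solveT (conjT b0 (enc_body (b1 :: bs)))) in *.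
  injection Heq as Ea Eb. change (subst sg (enc_body (b1 :: bs)) = sg b) in Eb.
  set (u := upd (upd Var b (enc_body (b1 :: bs))) a b0).
  assert (Hfix : forall x, In x (flat_map vars (concat ((b0 :: b1 :: bs) :: Ls))) -> u x = Var x).
  { intros x Hx. unfold u. rewrite !upd_neq; auto; intros ->; auto. }
  assert (Hunif : subst u (solve_body (b0 :: b1 :: bs)) =
                  subst u (solveT (conjT (Var a) (Var b)))).
  { rewrite (subst_solve_body_fixed u _ Ls Hfix). simpl. unfold u.
    now rewrite upd_eq, upd_neq, upd_eq. }
  replace (map (subst sg) _) with
    (map solve_body (map (map (subst sg)) ([b0] :: (b1 :: bs) :: Ls))).
  - apply solving; rewrite concat_map_map_subst.
    + now apply Forall_user_atom_map_subst.
    + exact (reachable_mod_variance_variant _ _ _ _ HR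
               (is_mgu_renames sg _ _ u _ Hmgu Hunif Hfix)).
  - simpl. rewrite <- map_solve_body. now rewrite <- Ea, <- Eb, subst_enc_body.
Qed.

Lemma solving_step_clause L1 Ls sg a b :
  a <> b -> ~ In a (flat_map vars (concat (L1 :: Ls))) ->
  ~ In b (flat_map vars (concat (L1 :: Ls))) ->
  Forall user_atom (concat (L1 :: Ls)) -> reachable_mod_variance P Q (concat (L1 :: Ls)) ->
  is_mgu sg (solve_body L1) (solveT (Var a)) ->
  meta_state (map (subst sg) ([clauseT (Var a) (Var b); solveT (Var b)] ++ map solve_body Ls)).
Proof.
  intros Hab Ha Hb Hu HR Hmgu. pose proof Hmgu as [Heq _]. injection Heq as Ea.
  destruct (singleton_cases L1) as [[b0 ->]|Hne].
  2:{ apply stuck. rewrite <- Ea. now apply reserved_atom_subst, reserved_enc_body. }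
  simpl in Ea.
  set (D := flat_map vars (concat ([b0] :: Ls))).
  set (u := upd Var a b0).
  assert (Hfix : forall x, In x D -> u x = Var x).
  { intros x Hx. unfold u. rewrite upd_neq; auto. intros ->; auto. }
  assert (Hunif : subst u (solve_body [b0]) = subst u (solveT (Var a))).
  { rewrite (subst_solve_body_fixed u _ Ls Hfix). simpl. unfold u. now rewrite upd_eq. }
  destruct (is_mgu_keeps_fresh_var sg _ _ u b D Hmgu Hunif) as [y [Ey Hy]]; auto.
  { unfold u. now rewrite upd_neq by congruence. }
  simpl. rewrite Ey, <- Ea, map_solve_body. apply fetching.
  - rewrite in_vars_subst. intros [x [Hx Hyx]]. apply (Hy x); auto. apply in_or_app; auto.
  - rewrite concat_map_map_subst, in_vars_map_subst. intros [x [Hx Hyx]].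
    apply (Hy x); auto. apply in_or_app; auto.
  - apply user_atom_subst. now apply Forall_inv in Hu.
  - rewrite concat_map_map_subst. apply Forall_user_atom_map_subst.
    now apply Forall_inv_tail in Hu.
  - rewrite concat_map_map_subst.
    exact (reachable_mod_variance_variant _ _ _ _ HR
             (is_mgu_renames sg _ _ u _ Hmgu Hunif Hfix)).
Qed.

Lemma solving_step Ls M' :
  Forall user_atom (concat Ls) -> reachable_mod_variance P Q (concat Ls) ->
  ld_step MP (map solve_body Ls) M' -> meta_state M'.
Proof.
  intros Hu HR Hs. remember (map solve_body Ls) as M eqn:EM.
  destruct Hs as [A G c c' sg Hin Hv Hfr Hmgu].
  destruct Ls as [|L1 Ls]; [discriminate|]. injection EM as -> ->.
  assert (Hfresh : forall x, In x (cl_vars c') -> ~ In x (flat_map vars (concat (L1 :: Ls)))).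
  { intros x Hx. rewrite <- in_vars_solve_body. exact (Hfr x Hx). }
  destruct (meta_clause_variant_cases c c' Hin Hv)
    as [p [q [Hqp [_ [->|[->|[->|[c0 [_ ->]]]]]]]]].
  - now apply (solving_step_true L1 Ls sg).
  - apply (solving_step_conj L1 Ls sg (p 0) (p 1)); auto; try (apply Hfresh; simpl; auto).
    intros E. apply (f_equal q) in E. now rewrite !Hqp in E.
  - apply (solving_step_clause L1 Ls sg (p 0) (p 1)); auto; try (apply Hfresh; simpl; auto).
    intros E. apply (f_equal q) in E. now rewrite !Hqp in E.
  - destruct Hmgu as [Heq _]. discriminate.
Qed.

Lemma fetching_step_fact B Y Ls c0 c1 sg :
  ~ In Y (vars B) -> ~ In Y (flat_map vars (concat Ls)) ->
  user_atom B -> Forall user_atom (concat Ls) ->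
  reachable_mod_variance P Q (B :: concat Ls) ->
  In c0 P -> cl_variant c0 c1 ->
  (forall x, In x (cl_vars (ce_clause c1)) ->
     ~ In x (flat_map vars (clauseT B (Var Y) :: solveT (Var Y) :: map solve_body Ls))) ->
  is_mgu sg (clauseT B (Var Y)) (Defs.head (ce_clause c1)) ->
  meta_state (map (subst sg) (body (ce_clause c1) ++ solveT (Var Y) :: map solve_body Ls)).
Proof.
  intros HYB HYL HuB HuL HR Hc0 Hv Hfr Hmgu.
  assert (Hbody : Forall user_atom (body c1)).
  { destruct Hv as [s [r [<- _]]]. apply Forall_user_atom_map_subst, Forall_forall.
    intros b Hb. now apply in_BE_user_atom, (definite_P c0 Hc0). }
  pose proof Hmgu as [Heq _]. injection Heq as _ EY.
  assert (HvM : forall x, In x (vars B) \/ x = Y \/ In x (flat_map vars (concat Ls)) ->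
                In x (flat_map vars (clauseT B (Var Y) :: solveT (Var Y) :: map solve_body Ls))).
  { intros x Hx. simpl. rewrite !in_app_iff. simpl. rewrite in_vars_solve_body.
    destruct Hx as [?|[->|?]]; auto. }
  assert (Hfr1 : forall x, In x (cl_vars c1) -> ~ In x (flat_map vars (B :: concat Ls))).
  { intros x Hx Hx'. apply (Hfr x); [now apply in_cl_vars_ce_clause|]. apply HvM.
    simpl in Hx'. rewrite in_app_iff in Hx'. tauto. }
  assert (HYc1 : ~ In Y (cl_vars c1)).
  { intros H. apply (Hfr Y); [now apply in_cl_vars_ce_clause | apply HvM; auto]. }
  destruct (is_mgu_forget_bound_var sg ClauseS B (Defs.head c1) Y (enc_body (body c1))
              (flat_map vars (body c1 ++ concat Ls)) Hmgu) as [tau [Htau Hagree]].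
  { unfold cl_vars in HYc1. rewrite flat_map_app, !in_app_iff, in_vars_enc_body in *. tauto. }
  assert (Etau : map (subst tau) (body c1 ++ concat Ls) = map (subst sg) (body c1 ++ concat Ls)).
  { apply map_subst_ext_in. intros x Hx. apply Hagree. rewrite !in_app_iff; auto. }
  simpl. rewrite EY, map_solve_body, subst_enc_body.
  change (meta_state (map solve_body (map (subst sg) (body c1) :: map (map (subst sg)) Ls))).
  apply solving; simpl; rewrite concat_map_map_subst, <- map_app.
  - apply Forall_user_atom_map_subst, Forall_app. auto.
  - rewrite <- Etau. apply (reachable_mod_variance_step _ _ _ _ HR).
    now apply ld_step_intro with c0.
Qed.

Lemma fetching_step B Y Ls M' :
  ~ In Y (vars B) -> ~ In Y (flat_map vars (concat Ls)) ->
  user_atom B -> Forall user_atom (concat Ls) ->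
  reachable_mod_variance P Q (B :: concat Ls) ->
  ld_step MP (clauseT B (Var Y) :: solveT (Var Y) :: map solve_body Ls) M' -> meta_state M'.
Proof.
  intros HYB HYL HuB HuL HR Hs.
  remember (clauseT B (Var Y) :: solveT (Var Y) :: map solve_body Ls) as M eqn:EM.
  destruct Hs as [A G c c' sg Hin Hv Hfr Hmgu]. injection EM as -> ->.
  destruct (meta_clause_variant_cases c c' Hin Hv)
    as [p [q [Hqp [_ [->|[->|[->|[c0 [Hc0 ->]]]]]]]]];
    try (destruct Hmgu as [Heq _]; discriminate).
  apply (fetching_step_fact B Y Ls c0); auto.
  exists (ren p), (ren q). split; auto. now apply subst_cl_ren_cancel.
Qed.

Lemma stuck_no_step t z R M' : reserved_atom t -> ~ ld_step MP (Fn ClauseS [t; z] :: R) M'.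
Proof.
  intros Ht Hs. remember (Fn ClauseS [t; z] :: R) as M eqn:EM.
  destruct Hs as [A G c c' sg Hin Hv Hfr Hmgu]. injection EM as -> ->.
  destruct (meta_clause_variant_cases c c' Hin Hv)
    as [p [q [Hqp [_ [->|[->|[->|[c0 [Hc0 ->]]]]]]]]];
    destruct Hmgu as [Heq _]; try discriminate.
  injection Heq as Heq _.
  apply (subst_user_atom_neq sg (subst (ren p) (Defs.head c0)) (subst sg t)).
  - now apply user_atom_subst, in_BE_user_atom, (proj1 (definite_P c0 Hc0)).
  - now apply reserved_atom_subst.
  - now symmetry.
Qed.

Lemma meta_state_step M M' : meta_state M -> ld_step MP M M' -> meta_state M'.
Proof.
  intros [Ls Hu HR|B Y Ls HYB HYL HuB HuL HR|t z R Ht] Hs.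
  - now apply (solving_step Ls).
  - now apply (fetching_step B Y Ls).
  - now destruct (stuck_no_step t z R M').
Qed.

Lemma meta_state_reach M M' : ld_reach MP M M' -> meta_state M -> meta_state M'.
Proof.
  intros H. induction H; auto. intros. apply IHclos_refl_trans_1n.
  eapply meta_state_step; eauto.
Qed.

Lemma meta_state_solve_user B G :
  meta_state (solveT B :: G) -> user_atom B ->
  exists B' G', ld_reach P [Q] (B' :: G') /\ variant B B'.
Proof.
  intros Hst HB. remember (solveT B :: G) as M eqn:EM.
  destruct Hst as [Ls Hu HR| |]; [|discriminate|discriminate].
  destruct Ls as [|L1 Ls]; [discriminate|]. injection EM as EB _.
  destruct (singleton_cases L1) as [[b0 ->]|Hne].
  2:{ exfalso. apply (user_atom_not_reserved B HB). rewrite <- EB.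
      now apply reserved_enc_body. }
  simpl in EB, HR. subst B.
  destruct HR as [G0 [HR0 [s [r [<- E2]]]]]. simpl in HR0, E2. injection E2 as E2 _.
  exists (subst s b0), (map (subst s) (concat Ls)). split; auto.
  now exists s, r.
Qed.

Lemma Call_of_Call_meta A :
  in_BE Q -> Call MP (solveT Q) (solveT A) -> in_BE A ->
  exists A', Call P Q A' /\ variant A A'.
Proof.
  intros HQ [A0 [G [HR [s [r [<- E2]]]]]] HA.
  assert (Hinit : meta_state (map solve_body [[Q]])).
  { apply solving; simpl.
    - constructor; auto. now apply in_BE_user_atom.
    - exists [Q]. split; [constructor | apply query_variant_refl]. }
  destruct (meta_state_solve_user (subst s A) G) as [B' [G' [HR' HV']]].
  - exact (meta_state_reach _ _ HR Hinit).
  - now apply user_atom_subst, in_BE_user_atom.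
  - exists B'. split.
    + exists B', G'. split; auto. exists Var, Var. now rewrite subst_Var.
    + apply variant_trans with (subst s A); auto. exists s, r. simpl in E2. now injection E2.
Qed.

End MetaInvariant.

Theorem mainTheorem1 :
  forall (P : program) (Q : term),
    definite_program P ->
    in_BE Q ->
    (forall A : term, Call P Q A ->
       exists A' : term, Call (M0 ++ ce P) (solveT Q) (solveT A') /\ variant A A') /\
    (forall A : term, Call (M0 ++ ce P) (solveT Q) (solveT A) -> in_BE A ->
       exists A' : term, Call P Q A' /\ variant A A').
Proof.
  intros P Q HP HQ. split.
  - apply Call_meta_of_Call.
  - intros A HA HBE. now apply Call_of_Call_meta.
Qed.
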